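(* Let $K$ be a field of characteristic zero, $K'\subseteq K$ a subfield, $R=K[x_1,\ldots,x_n]$ and $R'=K'[x_1,\ldots,x_n]$ (standard grading). Let $J\subset R'$ be a graded ideal with $R'/J$ Artinian and having the strong Lefschetz property. Let $\{\xi_{ij}: 1\le i\le m,\ 1\le j\le n\}\subset K$ be algebraically independent over $K'$, and put $L_i=\xi_{i1}x_1+\cdots+\xi_{in}x_n\in R$ for $1\le i\le m$. Then for all positive integers $d_1,\ldots,d_m$, the algebra $$A=R/\big(JR : L_1^{d_1}L_2^{d_2}\cdots L_m^{d_m}\big)$$ has the strong Lefschetz property.
   Context: For an ideal $I$ and element $f$, $I:f=\{g : gf\in I\}$. A standard graded Artinian $k$-algebra ($k$ a field) is $A=\bigoplus_{i=0}^c A_i$ with $A_0=k$, generated by $A_1$, finite-dimensional, and $A_c\neq 0$. $A$ has the strong Lefschetz property (SLP) if there exists a linear form $z\in A_1$ such that the multiplication map $\times z^d: A_i\to A_{i+d}$ has full rank (i.e. is injective or surjective) for all $1\le d\le c-1$ and $0\le i\le c-d$; such $z$ is called a strong Lefschetz (SL) element. *)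

From HB Require Import structures.
From mathcomp Require Import all_boot all_order all_algebra.
From mathcomp Require Import mpoly.
Set Implicit Arguments.
Unset Strict Implicit.
Unset Printing Implicit Defensive.
Import GRing.Theory.
Local Open Scope ring_scope.

Definition is_ideal (n : nat) (F : comNzRingType) (I : {mpoly F[n]} -> Prop) : Prop :=
  [/\ I 0,
      (forall p q, I p -> I q -> I (p + q)) &
      (forall r p, I p -> I (r * p))].

Definition is_graded (n : nat) (F : comNzRingType) (I : {mpoly F[n]} -> Prop) : Prop :=
  forall p (d : nat), I p -> I (pihomog mdeg d p).

Definition ext_ideal (n : nat) (K' K : fieldType) (f : {rmorphism K' -> K})
  (J : {mpoly K'[n]} -> Prop) : {mpoly K[n]} -> Prop :=
  fun p => exists s : seq ({mpoly K[n]} * {mpoly K'[n]}),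
    (forall x, x \in s -> J x.2) /\
    p = \sum_(x <- s) x.1 * map_mpoly f x.2.

Definition colon (n : nat) (F : comNzRingType) (I : {mpoly F[n]} -> Prop)
  (g : {mpoly F[n]}) : {mpoly F[n]} -> Prop :=
  fun q => I (q * g).

(* For a graded ideal I, the i-th graded piece of A = F[x]/I is
   F[x]_i / I_i.  A_i = 0 iff every homogeneous form of degree i is in I. *)
Definition piece_zero (n : nat) (F : fieldType) (I : {mpoly F[n]} -> Prop)
  (i : nat) : Prop :=
  forall p : {mpoly F[n]}, p \is i.-homog -> I p.

Definition artinian (n : nat) (F : fieldType) (I : {mpoly F[n]} -> Prop) : Prop :=
  exists N : nat, forall i, (N <= i)%N -> piece_zero I i.

(* Multiplication by z^d : A_i -> A_(i+d) has full rank (injective or surjective). *)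
Definition mult_full_rank (n : nat) (F : fieldType) (I : {mpoly F[n]} -> Prop)
  (z : {mpoly F[n]}) (d i : nat) : Prop :=
  (forall p : {mpoly F[n]}, p \is i.-homog -> I (z ^+ d * p) -> I p)
  \/
  (forall g : {mpoly F[n]}, g \is (i + d)%N.-homog ->
     exists p : {mpoly F[n]}, p \is i.-homog /\ I (g - z ^+ d * p)).

(* A = F[x]/I (I graded) is Artinian and has the strong Lefschetz property:
   there is a linear form z such that, c being the socle degree of A
   (A_c <> 0, A_(c+1) = 0), x z^d : A_i -> A_(i+d) has full rank for all
   1 <= d <= c-1 and 0 <= i <= c-d.  (For A = 0 the condition is vacuous.) *)
Definition has_SLP (n : nat) (F : fieldType) (I : {mpoly F[n]} -> Prop) : Prop :=
  artinian I /\
  exists z : {mpoly F[n]}, z \is 1%N.-homog /\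
    forall c d i : nat, ~ piece_zero I c -> piece_zero I c.+1 ->
      (1 <= d)%N -> (d <= c - 1)%N -> (i <= c - d)%N ->
      mult_full_rank I z d i.

Definition alg_indep (K' K : fieldType) (f : {rmorphism K' -> K}) (m n : nat)
  (xi : 'M[K]_(m, n)) : Prop :=
  forall P : {mpoly K'[m * n]},
    (map_mpoly f P).@[fun k => mxvec xi 0 k] = 0 -> P = 0.

Definition lin_form (K : fieldType) (m n : nat) (xi : 'M[K]_(m, n)) (i : 'I_m)
  : {mpoly K[n]} := \sum_(j < n) xi i j *: 'X_j.

From HB Require Import structures.
From mathcomp Require Import all_boot all_order all_algebra.
From mathcomp Require Import mpoly.
From Stdlib Require Import Classical ClassicalEpsilon.
From mathcomp Require Import zify.
Set Implicit Arguments.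
Unset Strict Implicit.
Unset Printing Implicit Defensive.
Import GRing.Theory.
Local Open Scope ring_scope.

(* Write A = K[x]/JR and F = L_1^d_1 ... L_m^d_m of degree D.  The graded pieces
   of R/(JR : F) and the multiplication maps on them are governed by ranks of
   multiplication maps on A: dim (R/(JR : F))_i is the rank of
   F : A_i -> A_(i+D), and z^e : (R/(JR : F))_i -> (R/(JR : F))_(i+e) has the
   rank of z^e F : A_i -> A_(i+e+D).  Moreover A_k = K (x) (R'/J)_k.  Take for z
   a strong Lefschetz element l of R'/J.  The matrix of z^e F is the
   specialization, at the algebraically independent xi_ij, of a matrix over
   K'[Y_ij]; specializing instead every L_i to l gives the matrix of l^(e+D) on
   R'/J, and a nonzero minor of the latter stays nonzero at the generic point.
   Hence rank (z^e F) >= rank (l^(e+D)), which is maximal on R'/J, while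
   dim (R/(JR : F))_i <= dim (R'/J)_i and
   dim (R/(JR : F))_(i+e) <= dim (R'/J)_(i+e+D). *)

(* A form of degree k is encoded by its coordinates on the monomials of degree k. *)
Definition monos n k : seq 'X_{1..n} :=
  [seq val m | m <- enum [pred m : 'X_{1..n < k.+1} | mdeg (val m) == k]].

Definition nmonos n k := size (monos n k).

Definition mono n k (t : 'I_(nmonos n k)) : 'X_{1..n} := nth 0%MM (monos n k) t.

Lemma monos_uniq n k : uniq (monos n k).
Proof. by rewrite map_inj_uniq ?enum_uniq //; apply: val_inj. Qed.

Lemma mem_monos n k (m : 'X_{1..n}) : (m \in monos n k) = (mdeg m == k).
Proof.
apply/mapP/idP => [[m' ] | hm]; first by rewrite mem_enum inE => hm ->.
have hb : (mdeg m < k.+1)%N by rewrite (eqP hm).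
by exists (BMultinom hb); rewrite ?mem_enum ?inE.
Qed.

Lemma mdeg_mono n k t : mdeg (@mono n k t) = k.
Proof. by apply/eqP; rewrite -mem_monos mem_nth. Qed.

Lemma mono_inj n k : injective (@mono n k).
Proof.
move=> s t /eqP; rewrite nth_uniq ?monos_uniq ?ltn_ord //.
by move/eqP/val_inj.
Qed.

Lemma monoP n k (m : 'X_{1..n}) : mdeg m = k -> exists t, @mono n k t = m.
Proof.
move=> hm; have hin : m \in monos n k by rewrite mem_monos hm.
have hi : (index m (monos n k) < nmonos n k)%N by rewrite index_mem.
by exists (Ordinal hi); rewrite /mono /= nth_index.
Qed.

Section Coordinates.
Variables (R : nzRingType) (n k : nat).

Definition hcoord (p : {mpoly R[n]}) : 'rV[R]_(nmonos n k) := \row_t p@_(mono t).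

Definition hform (v : 'rV[R]_(nmonos n k)) : {mpoly R[n]} :=
  \sum_t v 0 t *: 'X_[mono t].

Lemma mcoeff_hform (v : 'rV[R]_(nmonos n k)) m :
  (hform v)@_m = \sum_t v 0 t * (mono t == m)%:R.
Proof.
by rewrite /hform raddf_sum; apply: eq_bigr => t _ /=; rewrite mcoeffZ mcoeffX.
Qed.

Lemma hformK : cancel hform hcoord.
Proof.
move=> v; apply/rowP => t; rewrite mxE mcoeff_hform (bigD1 t) //= eqxx mulr1.
rewrite big1 ?addr0 ?[t in v t]ord1 // => s hs.
by rewrite (inj_eq (@mono_inj n k)) (negbTE hs) mulr0.
Qed.

Lemma hcoordK p : p \is k.-homog -> hform (hcoord p) = p.
Proof.
move=> hp; apply/mpolyP => m; rewrite mcoeff_hform.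
have [hm|hm] := eqVneq (mdeg m) k.
  have [t <-] := monoP hm; rewrite (bigD1 t) //= eqxx mulr1 mxE big1 ?addr0 //.
  by move=> s hs; rewrite (inj_eq (@mono_inj n k)) (negbTE hs) mulr0.
rewrite (dhomog_nemf_coeff hp hm) big1 // => t _.
by case: eqP => [ht|_]; [rewrite -ht mdeg_mono eqxx in hm | rewrite mulr0].
Qed.

Lemma hform_homog v : hform v \is k.-homog.
Proof. by apply/rpred_sum => t _; apply/rpredZ; rewrite dhomogX /= mdeg_mono. Qed.

Lemma hcoord_pihomog p : hcoord (pihomog mdeg k p) = hcoord p.
Proof.
apply/rowP => t; rewrite !mxE pihomogE raddf_sum /= big_mkcond /=.
rewrite [in RHS](mpolyE p) raddf_sum /=; apply: eq_bigr => m _.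
rewrite mcoeffZ mcoeffX; case: ifP => [//|hmk].
by case: eqP => [ht|_]; [rewrite ht mdeg_mono eqxx in hmk | rewrite mulr0].
Qed.

End Coordinates.

Fact hcoord_is_linear (R : nzRingType) n k : linear (@hcoord R n k).
Proof. by move=> a p q; apply/rowP => t; rewrite !mxE mcoeffD mcoeffZ. Qed.

HB.instance Definition _ (R : nzRingType) n k :=
  GRing.isLinear.Build R {mpoly R[n]} 'rV[R]_(nmonos n k) _ (@hcoord R n k)
    (@hcoord_is_linear R n k).

Fact hform_is_linear (R : nzRingType) n k : linear (@hform R n k).
Proof.
move=> a u v; rewrite /hform scaler_sumr -big_split.
by apply: eq_bigr => t _; rewrite !mxE scalerDl scalerA.
Qed.

HB.instance Definition _ (R : nzRingType) n k :=
  GRing.isLinear.Build R 'rV[R]_(nmonos n k) {mpoly R[n]} _ (@hform R n k)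
    (@hform_is_linear R n k).

Lemma hform_map (R S : nzRingType) (f : {rmorphism R -> S}) n k
    (v : 'rV[R]_(nmonos n k)) :
  hform (map_mx f v) = map_mpoly f (hform v).
Proof.
by rewrite /hform raddf_sum; apply: eq_bigr => t _ /=; rewrite map_mpolyZ map_mpolyX mxE.
Qed.

Lemma hcoord_map (R S : nzRingType) (f : {rmorphism R -> S}) n k (p : {mpoly R[n]}) :
  hcoord k (map_mpoly f p) = map_mx f (hcoord k p).
Proof. by apply/rowP => t; rewrite !mxE mcoeff_map_mpoly. Qed.

Section RowspaceOfPredicate.
Variables (F : fieldType) (N : nat).
Implicit Type S : 'rV[F]_N -> Prop.

Definition linear_pred S := S 0 /\ forall a u v, S u -> S v -> S (a *: u + v).

Lemma linear_pred_mulmx S p (A : 'M_(p, N)) u :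
  linear_pred S -> (forall i, S (row i A)) -> S (u *m A).
Proof.
move=> [S0 SD] SA; rewrite mulmx_sum_row; apply: (big_ind S) => //.
  by move=> x y Sx Sy; have := SD 1 x y Sx Sy; rewrite scale1r.
by move=> i _; have := SD (u 0 i) _ 0 (SA i) S0; rewrite addr0.
Qed.

Lemma linear_pred_rowspace S :
  linear_pred S -> exists E : 'M_N, forall v, (v <= E)%MS <-> S v.
Proof.
move=> linS; have [S0 SD] := linS.
pose inS (E : 'M_N) := forall w : 'rV_N, (w <= E)%MS -> S w.
have grow r : (exists E, inS E /\ (r <= \rank E)%N) \/
                (exists E, inS E /\ forall v, S v -> (v <= E)%MS).
  elim: r => [|r [[E [SE rkE]] | ]]; last by right.
    by left; exists 0; split=> // w; rewrite submx0 => /eqP ->.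
  have [ES|] := classic (forall v, S v -> (v <= E)%MS); first by right; exists E.
  move=> /not_all_ex_not [v] /(@imply_to_and (S v)) [Sv vNE].
  left; exists (E + v)%MS; split.
    move=> w /sub_addsmxP [[u1 u2] /= ->].
    have := SD 1 _ _ (SE _ (submxMl u1 E)) (linear_pred_mulmx u2 linS _).
    by rewrite scale1r; apply=> i; rewrite row_id.
  have : (E < E + v)%MS.
    rewrite ltmxE addsmxSl /=; apply: contra_notN vNE => sEv.
    exact: submx_trans (addsmxSr E v) sEv.
  by rewrite ltmxErank => /andP [_]; apply: leq_ltn_trans.
have [[E [_ rkE]] | [E [SE ES]]] := grow N.+1.
  by have := rank_leq_col E; rewrite leqNgt rkE.
by exists E => v; split; [apply: SE | apply: ES].
Qed.

Definition rowspace_of S : 'M_N :=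
  epsilon (inhabits 0) (fun E => forall v, (v <= E)%MS <-> S v).

Lemma rowspace_ofP S : linear_pred S -> forall v, (v <= rowspace_of S)%MS <-> S v.
Proof.
move/linear_pred_rowspace; exact: epsilon_spec.
Qed.

End RowspaceOfPredicate.

Lemma mxrank_eq_of_kermx (F : fieldType) m p q (A : 'M[F]_(m, p)) (B : 'M[F]_(m, q)) :
  (forall u : 'rV_m, u *m A = 0 <-> u *m B = 0) -> \rank A = \rank B.
Proof.
move=> kerAB; have: (kermx A == kermx B)%MS.
  by apply/rV_eqP => u; apply/sub_kermxP/sub_kermxP => /kerAB.
move/eqmx_rank; rewrite !mxrank_ker.
by have := rank_leq_row A; have := rank_leq_row B; lia.
Qed.

Lemma mxrank_mul_cokermx_eq (F : fieldType) m p q r (M : 'M[F]_(m, p))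
    (A : 'M[F]_(q, p)) (B : 'M[F]_(r, p)) :
  (A :=: B)%MS -> \rank (M *m cokermx A) = \rank (M *m cokermx B).
Proof.
move=> eqAB; apply: mxrank_eq_of_kermx => u; rewrite !(mulmxA u).
by split=> /eqP h; apply/eqP; move: h; rewrite -!submxE eqAB.
Qed.

Section Ideals.
Variables (R : comNzRingType) (n : nat) (I : {mpoly R[n]} -> Prop).
Hypothesis idealI : is_ideal I.

Lemma idealZ a p : I p -> I (a *: p).
Proof. by case: idealI => _ _ IM Ip; rewrite -mul_mpolyC; apply: IM. Qed.

Lemma colon_is_ideal G : is_ideal (colon I G).
Proof.
case: idealI => I0 ID IM; split; rewrite /colon.
- by rewrite mul0r.
- by move=> p q Ip Iq; rewrite mulrDl; apply: ID.
- by move=> r p Ip; rewrite -mulrA; apply: IM.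
Qed.

End Ideals.

Definition form_mulmx (R : nzRingType) n i k (g : {mpoly R[n]}) :
  'M[R]_(nmonos n i, nmonos n k) := \matrix_(s, t) (g * 'X_[mono s])@_(mono t).

Lemma form_mulmxE (R : comNzRingType) n i k (g : {mpoly R[n]}) u :
  u *m form_mulmx i k g = hcoord k (g * hform u).
Proof.
apply/rowP => t; rewrite !mxE /hform mulr_sumr raddf_sum /=.
by apply: eq_bigr => s _; rewrite !mxE -scalerAr mcoeffZ.
Qed.

Lemma map_form_mulmx (R S : nzRingType) (f : {rmorphism R -> S}) n i k
    (g : {mpoly R[n]}) :
  map_mx f (form_mulmx i k g) = form_mulmx i k (map_mpoly f g).
Proof.
by apply/matrixP => s t; rewrite !mxE -mcoeff_map_mpoly rmorphM /= map_mpolyX.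
Qed.

(* [idealmx I k] spans the degree-k part of I, so [quot_dim I k] is
   dim (F[x]/I)_k; [quot_mulmx I g i k] represents multiplication by g from
   (F[x]/I)_i to (F[x]/I)_k, the target being read modulo [idealmx I k]
   through cokermx. *)
Section GradedPieces.
Variables (F : fieldType) (n : nat) (I : {mpoly F[n]} -> Prop).

Definition idealmx k : 'M[F]_(nmonos n k) := rowspace_of (fun v => I (hform v)).

Definition quot_dim k := (nmonos n k - \rank (idealmx k))%N.

Definition quot_mulmx g i k := form_mulmx i k g *m cokermx (idealmx k).

Hypothesis idealI : is_ideal I.

Lemma ideal_linear_pred k : linear_pred (fun v : 'rV_(nmonos n k) => I (hform v)).
Proof.
have [I0 ID _] := idealI; split; first by rewrite raddf0.
by move=> a u w Iu Iw; rewrite linearP; apply: ID => //; apply: idealZ.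
Qed.

Lemma idealmxP k v : (v <= idealmx k)%MS <-> I (hform v).
Proof. exact: rowspace_ofP (ideal_linear_pred k) v. Qed.

Variables (g : {mpoly F[n]}) (e i k : nat).
Hypotheses (homg : g \is e.-homog) (ik : k = (i + e)%N).

Lemma mul_hform_homog (u : 'rV_(nmonos n i)) : g * hform u \is k.-homog.
Proof. by rewrite ik addnC; apply: dhomogM homg (hform_homog u). Qed.

Lemma quot_mulmx_ker u : u *m quot_mulmx g i k = 0 <-> I (g * hform u).
Proof.
rewrite /quot_mulmx mulmxA form_mulmxE -[X in I X](hcoordK (mul_hform_homog u)).
split=> [/eqP | ]; first by rewrite -submxE => /idealmxP.
by move/idealmxP; rewrite submxE => /eqP.
Qed.

Lemma idealmx_sub_kermx : (idealmx i <= kermx (quot_mulmx g i k))%MS.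
Proof.
apply/row_subP => j; apply/sub_kermxP/quot_mulmx_ker.
by case: idealI => _ _ IM; apply/IM/idealmxP/row_sub.
Qed.

Lemma rank_quot_mulmx_le_src : (\rank (quot_mulmx g i k) <= quot_dim i)%N.
Proof.
have := mxrankS idealmx_sub_kermx; rewrite mxrank_ker /quot_dim.
by have := rank_leq_row (quot_mulmx g i k); lia.
Qed.

Lemma quot_mulmx_injP :
  (forall p, p \is i.-homog -> I (g * p) -> I p) <->
  (quot_dim i <= \rank (quot_mulmx g i k))%N.
Proof.
set X := quot_mulmx g i k.
have kerP : (kermx X <= idealmx i)%MS = (quot_dim i <= \rank X)%N.
  have [_ <-] := mxrank_leqif_sup idealmx_sub_kermx.
  have := mxrankS idealmx_sub_kermx; rewrite mxrank_ker /quot_dim -/X.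
  have := rank_leq_row X; have := rank_leq_row (idealmx i).
  by move=> *; apply/idP/idP; lia.
rewrite -kerP; split=> [inj | kerI p hp Igp].
  apply/row_subP => j; apply/idealmxP/inj; first exact: hform_homog.
  exact/quot_mulmx_ker/sub_kermxP/row_sub.
rewrite -(hcoordK hp); apply/idealmxP; apply: submx_trans kerI.
by apply/sub_kermxP/quot_mulmx_ker; rewrite hcoordK.
Qed.

Lemma quot_mulmx_surjP :
  (forall h, h \is k.-homog -> exists p, p \is i.-homog /\ I (h - g * p)) <->
  (quot_dim k <= \rank (quot_mulmx g i k))%N.
Proof.
set X := quot_mulmx g i k.
have sXcoker : (X <= cokermx (idealmx k))%MS by apply: submxMl.
have cokerP : (cokermx (idealmx k) <= X)%MS = (quot_dim k <= \rank X)%N.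
  have [_ <-] := mxrank_leqif_sup sXcoker.
  have := mxrankS sXcoker; rewrite mxrank_coker /quot_dim.
  by move=> *; apply/idP/idP; lia.
rewrite -cokerP; split=> [surj | cokerX h hh].
  apply/row_subP => j; rewrite rowE.
  have [p [hp Ip]] := surj _ (hform_homog 'e_j).
  have homgp : g * p \is k.-homog by rewrite ik addnC; apply: dhomogM.
  have -> : 'e_j *m cokermx (idealmx k) = hcoord k (g * p) *m cokermx (idealmx k).
    apply/eqP; rewrite -subr_eq0 -mulmxBl -submxE; apply/idealmxP.
    by rewrite raddfB /= hcoordK.
  by rewrite -(hcoordK hp) -form_mulmxE -mulmxA submxMl.
have /submxP [u hu] : (hcoord k h *m cokermx (idealmx k) <= X)%MS.
  exact: submx_trans (submxMl _ _) cokerX.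
exists (hform u); split; first exact: hform_homog.
have -> : h - g * hform u = hform (hcoord k h - hcoord k (g * hform u)).
  by rewrite raddfB /= !hcoordK // mul_hform_homog.
apply/idealmxP.
by rewrite submxE mulmxBl hu /X /quot_mulmx mulmxA form_mulmxE subrr.
Qed.

End GradedPieces.

Lemma rank_quot_mulmx_le_tgt (F : fieldType) n (I : {mpoly F[n]} -> Prop) g i k :
  (\rank (quot_mulmx I g i k) <= quot_dim I k)%N.
Proof. by rewrite /quot_dim -mxrank_coker; apply: mxrankM_maxr. Qed.

Section Colon.
Variables (F : fieldType) (n : nat) (I : {mpoly F[n]} -> Prop).
Variables (G : {mpoly F[n]}) (D : nat).
Hypotheses (idealI : is_ideal I) (homG : G \is D.-homog).

Lemma piece_zero_colon k : piece_zero I (k + D) -> piece_zero (colon I G) k.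
Proof. by move=> zI p hp; apply/zI/dhomogM. Qed.

Lemma rank_quot_mulmx_colon g e i k k' : g \is e.-homog -> k = (i + e)%N ->
  k' = (k + D)%N ->
  \rank (quot_mulmx (colon I G) g i k) = \rank (quot_mulmx I (g * G) i k').
Proof.
move=> homg ik ik'; apply: mxrank_eq_of_kermx => u.
rewrite (quot_mulmx_ker (colon_is_ideal idealI G) homg ik) /colon mulrAC.
by rewrite (quot_mulmx_ker idealI (dhomogM homg homG)) // ik' ik addnA.
Qed.

Lemma quot_dim_colon i k : k = (i + D)%N ->
  quot_dim (colon I G) i = \rank (quot_mulmx I G i k).
Proof.
move=> ik; have idealC := colon_is_ideal idealI G.
have kerE : (idealmx (colon I G) i == kermx (quot_mulmx I G i k))%MS.
  apply/rV_eqP => u; apply/idP/idP => [/(idealmxP idealC) | /sub_kermxP].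
    by rewrite /colon mulrC => /(quot_mulmx_ker idealI homG ik)/sub_kermxP.
  by move/(quot_mulmx_ker idealI homG ik); rewrite mulrC => /(idealmxP idealC).
rewrite /quot_dim (eqmx_rank kerE) mxrank_ker.
by have := rank_leq_row (quot_mulmx I G i k); lia.
Qed.

End Colon.

Lemma pihomog_mulX (R : comNzRingType) n k (m : 'X_{1..n}) (q : {mpoly R[n]}) :
  pihomog mdeg k ('X_[m] * q) =
  if (mdeg m <= k)%N then 'X_[m] * pihomog mdeg (k - mdeg m) q else 0.
Proof.
rewrite [in LHS](mpolyE q) [in RHS](mpolyE q) mulr_sumr raddf_sum /=.
case: ifP => hm.
  rewrite raddf_sum /= mulr_sumr; apply: eq_bigr => mu _.
  rewrite -scalerAr !linearZ /= -scalerAr -mpolyXD !pihomogX mfD /=.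
  by case: eqP => h1; case: eqP => h2; rewrite ?mulr0 ?mpolyXD //; lia.
rewrite big1 // => mu _; rewrite -scalerAr linearZ /= -mpolyXD pihomogX mfD /=.
by case: eqP => h1; rewrite ?scaler0 //; lia.
Qed.

Lemma map_mpoly_homog (R S : nzRingType) (f : {rmorphism R -> S}) n k
    (p : {mpoly R[n]}) :
  injective f -> p \is k.-homog -> map_mpoly f p \is k.-homog.
Proof.
move=> injf /dhomogP hp; apply/dhomogP => m.
by rewrite (perm_mem (msupp_map_mpoly _ injf)); apply: hp.
Qed.

Section ExtensionOfScalars.
Variables (K' K : fieldType) (f : {rmorphism K' -> K}) (n : nat).
Variable J : {mpoly K'[n]} -> Prop.

Lemma ext_ideal_is_ideal : is_ideal (ext_ideal f J).
Proof.
split.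
- by exists [::]; rewrite big_nil.
- move=> p q [s [Js ->]] [t [Jt ->]]; exists (s ++ t); rewrite big_cat.
  by split=> // x; rewrite mem_cat => /orP [/Js | /Jt].
- move=> r p [s [Js ->]]; exists [seq (r * x.1, x.2) | x <- s]; split.
    by move=> x /mapP [y /Js Jy ->].
  by rewrite big_map mulr_sumr; apply: eq_bigr => x _; rewrite mulrA.
Qed.

Lemma ext_ideal_map q : J q -> ext_ideal f J (map_mpoly f q).
Proof.
move=> Jq; exists [:: (1, q)]; rewrite big_seq1 mul1r.
by split=> // x; rewrite inE => /eqP ->.
Qed.

Lemma piece_zero_ext k : piece_zero J k -> piece_zero (ext_ideal f J) k.
Proof.
move=> zJ p hp; have idealA := ext_ideal_is_ideal; have [A0 AD _] := idealA.
rewrite (mpolyE p) big_seq; apply: (big_ind (ext_ideal f J)) => // m hm.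
apply: (idealZ idealA); rewrite -(map_mpolyX f); apply/ext_ideal_map/zJ.
by rewrite dhomogX /= (dhomog_mf hp hm).
Qed.

Hypotheses (idealJ : is_ideal J) (gradedJ : is_graded J).

Lemma hcoord_mulX_ext k m q : J q ->
  (hcoord k ('X_[m] * map_mpoly f q) <= map_mx f (idealmx J k))%MS.
Proof.
move=> Jq; rewrite -(map_mpolyX f) -rmorphM hcoord_map map_submx.
rewrite -hcoord_pihomog pihomog_mulX; case: ifP => hm; last by rewrite raddf0 sub0mx.
apply/(idealmxP idealJ); rewrite hcoordK.
  by case: idealJ => _ _ JM; apply/JM/gradedJ.
by rewrite -{2}(subnKC hm); apply: dhomogM; [rewrite dhomogX | apply: pihomogP].
Qed.

Lemma ext_idealP k v :
  ext_ideal f J (hform v) <-> (v <= map_mx f (idealmx J k))%MS.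
Proof.
split=> [[s [Js sE]] | /submxP [u ->]].
  rewrite -[v]hformK sE raddf_sum /= big_seq; apply: summx_sub => -[r q] /Js Jq.
  rewrite [r]mpolyE mulr_suml raddf_sum; apply: summx_sub => m _ /=.
  by rewrite -scalerAl linearZ scalemx_sub ?hcoord_mulX_ext.
apply: (linear_pred_mulmx u (ideal_linear_pred ext_ideal_is_ideal k)) => j.
by rewrite -map_row hform_map; apply/ext_ideal_map/(idealmxP idealJ)/row_sub.
Qed.

Lemma idealmx_ext k : (idealmx (ext_ideal f J) k :=: map_mx f (idealmx J k))%MS.
Proof.
apply/eqmxP/rV_eqP => v; apply/idP/idP.
  by move/(idealmxP ext_ideal_is_ideal)/ext_idealP.
by move/ext_idealP/(idealmxP ext_ideal_is_ideal).
Qed.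

Lemma quot_dim_ext k : quot_dim (ext_ideal f J) k = quot_dim J k.
Proof. by rewrite /quot_dim idealmx_ext mxrank_map. Qed.

Lemma rank_quot_mulmx_ext g i k :
  \rank (quot_mulmx (ext_ideal f J) g i k) =
  \rank (form_mulmx i k g *m map_mx f (cokermx (idealmx J k))).
Proof. by rewrite map_cokermx; apply/mxrank_mul_cokermx_eq/idealmx_ext. Qed.

End ExtensionOfScalars.

Lemma mxrank_unit_minor (F : fieldType) p q (A : 'M[F]_(p, q)) :
  exists (P : 'M_(\rank A, p)) (Q : 'M_(q, \rank A)), P *m A *m Q = 1%:M.
Proof.
set r := \rank A.
exists (pid_mx r *m invmx (col_ebase A)), (invmx (row_ebase A) *m pid_mx r).
rewrite -{2}(mulmx_ebase A) !mulmxA -(mulmxA (pid_mx r)) mulVmx ?col_ebase_unit //.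
rewrite mulmx1 -(mulmxA _ (row_ebase A)) mulmxV ?row_ebase_unit // mulmx1.
rewrite !mul_pid_mx minnn (minn_idPr (rank_leq_row A)) minnn.
by rewrite (minn_idPr (rank_leq_col A)) pid_mx_1.
Qed.

Lemma mxrank_map_generic (S : comNzRingType) (F1 F2 : fieldType)
    (phi : {rmorphism S -> F1}) (psi : {rmorphism S -> F2})
    (c : {rmorphism F2 -> S}) :
  psi \o c =1 id -> (forall P, phi P = 0 -> P = 0) ->
  forall p q (M : 'M[S]_(p, q)), (\rank (map_mx psi M) <= \rank (map_mx phi M))%N.
Proof.
move=> psic phi_inj p q M.
have [P [Q PMQ]] := mxrank_unit_minor (map_mx psi M).
pose B := map_mx c P *m M *m map_mx c Q.
have psiB : map_mx psi B = 1%:M by rewrite !map_mxM -!map_mx_comp !map_mx_id.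
have : phi (\det B) != 0.
  apply/eqP => /phi_inj detB0; have := congr1 psi detB0.
  by rewrite rmorph0 -det_map_mx psiB det1 => /eqP; rewrite oner_eq0.
rewrite -det_map_mx -unitfE -unitmxE => /mxrank_unit <-.
by rewrite !map_mxM; apply: leq_trans (mxrankM_maxl _ _) _; apply: mxrankM_maxr.
Qed.

Lemma dhomog1E (R : nzRingType) n (l : {mpoly R[n]}) :
  l \is 1.-homog -> l = \sum_(j < n) l@_U_(j) *: 'X_j.
Proof.
move=> homl; apply/mpolyP => m; rewrite raddf_sum /=.
have [/eqP/mdeg1P [j /eqP ->] | hm] := eqVneq (mdeg m) 1%N.
  rewrite (bigD1 j) //= mcoeffZ mcoeffX eqxx mulr1 big1 ?addr0 // => t htj.
  by rewrite mcoeffZ mcoeffX eq_mnm1 (negbTE htj) mulr0.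
rewrite (dhomog_nemf_coeff homl hm) big1 // => j _.
rewrite mcoeffZ mcoeffX.
by case: eqP => [hj|_]; [rewrite -hj mdeg1 eqxx in hm | rewrite mulr0].
Qed.

Lemma dhomog_prod_expn (R : nzRingType) n m (L : 'I_m -> {mpoly R[n]})
    (d : 'I_m -> nat) :
  (forall j, L j \is 1.-homog) -> \prod_j L j ^+ d j \is (\sum_j d j)%N.-homog.
Proof.
move=> homL; apply: (big_ind2 (fun p (k : nat) => p \is k.-homog)).
- exact: dhomog1.
- by move=> p1 p2 k1 k2; apply: dhomogM.
- by move=> j _; have := dhomogMn (d j) (homL j); rewrite mul1n.
Qed.

Lemma lin_form_homog (K : fieldType) m n (xi : 'M[K]_(m, n)) j :
  lin_form xi j \is 1.-homog.
Proof. by apply/rpred_sum => t _; apply/rpredZ; rewrite dhomogX /= mdeg1. Qed.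

Section GenericLinearForms.
Variables (K' K : fieldType) (f : {rmorphism K' -> K}) (n : nat).
Variables (J : {mpoly K'[n]} -> Prop) (m : nat) (xi : 'M[K]_(m, n)) (d : 'I_m -> nat).
Hypotheses (idealJ : is_ideal J) (gradedJ : is_graded J) (indep : alg_indep f xi).

Lemma rank_quot_mulmx_specialize (l : {mpoly K'[n]}) e i k : l \is 1.-homog ->
  (\rank (quot_mulmx J (l ^+ (e + \sum_j d j)%N) i k) <=
   \rank (quot_mulmx (ext_ideal f J)
            (map_mpoly f l ^+ e * \prod_j lin_form xi j ^+ d j) i k))%N.
Proof.
move=> homl; pose S := {mpoly K'[m * n]}.
pose c : {rmorphism K' -> S} := @mpolyC (m * n) K'.
pose genL j : {mpoly S[n]} := \sum_(t < n) 'X_(mxvec_index j t) *: 'X_t.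
pose G := map_mpoly c l ^+ e * \prod_j genL j ^+ d j.
pose phi : {rmorphism S -> K} := meval (fun t => mxvec xi 0 t) \o map_mpoly f.
pose psi : {rmorphism S -> K'} := meval (mxvec (\matrix_(j < m, t < n) l@_U_(t)) 0).
have psic : psi \o c =1 id by move=> a; rewrite /= mevalC.
have phic : phi \o c =1 f by move=> a; rewrite /= map_mpolyC mevalC.
have psiG : map_mpoly psi G = l ^+ (e + \sum_j d j)%N.
  rewrite rmorphM rmorphXn rmorph_prod exprD -prodrXr; congr (_ ^+ _ * _).
    by apply/mpolyP => mu; rewrite !mcoeff_map_mpoly; apply: psic.
  apply: eq_bigr => j _; rewrite rmorphXn raddf_sum [in RHS](dhomog1E homl).
  congr (_ ^+ _); apply: eq_bigr => t _ /=.
  by rewrite map_mpolyZ map_mpolyX /= mevalXU mxvecE mxE.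
have phiG : map_mpoly phi G = map_mpoly f l ^+ e * \prod_j lin_form xi j ^+ d j.
  rewrite rmorphM rmorphXn rmorph_prod; congr (_ ^+ _ * _).
    by apply/mpolyP => mu; rewrite !mcoeff_map_mpoly; apply: phic.
  apply: eq_bigr => j _; rewrite rmorphXn raddf_sum; congr (_ ^+ _).
  by apply: eq_bigr => t _ /=; rewrite map_mpolyZ map_mpolyX /= map_mpolyX mevalXU mxvecE.
have := mxrank_map_generic (phi := phi) psic indep
  (form_mulmx i k G *m map_mx c (cokermx (idealmx J k))).
rewrite [map_mx psi _]map_mxM [map_mx phi _]map_mxM !map_form_mulmx psiG phiG.
rewrite -!map_mx_comp (map_mx_id psic) (eq_map_mx _ phic).
by rewrite rank_quot_mulmx_ext.
Qed.

End GenericLinearForms.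

Lemma artinian_socle (F : fieldType) n (I : {mpoly F[n]} -> Prop) k :
  artinian I -> ~ piece_zero I k ->
  exists2 c, (k <= c)%N & ~ piece_zero I c /\ piece_zero I c.+1.
Proof.
case=> N zN; move: {2}(N - k)%N (erefl (N - k)%N) => j.
elim: j k => [|j IH] k Nk nzk; first by case: nzk; apply: zN; lia.
have [zk1|nzk1] := classic (piece_zero I k.+1); first by exists k.
have Nk1 : (N - k.+1 = j)%N by lia.
by have [c kc socc] := IH k.+1 Nk1 nzk1; exists c => //; apply: ltnW.
Qed.

Section FullRankTransfer.
Variables (K' K : fieldType) (f : {rmorphism K' -> K}) (n : nat).
Variables (J : {mpoly K'[n]} -> Prop) (m : nat) (xi : 'M[K]_(m, n)) (d : 'I_m -> nat).
Hypotheses (idealJ : is_ideal J) (gradedJ : is_graded J) (indep : alg_indep f xi).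

Lemma full_rank_colon (l : {mpoly K'[n]}) e i : l \is 1.-homog ->
  mult_full_rank J l (e + \sum_j d j)%N i ->
  mult_full_rank (colon (ext_ideal f J) (\prod_j lin_form xi j ^+ d j))
    (map_mpoly f l) e i.
Proof.
move=> homl; set F := \prod_j _; set D := (\sum_j _)%N.
have idealA := ext_ideal_is_ideal f J.
have homF : F \is D.-homog := dhomog_prod_expn d (lin_form_homog xi).
have homz : map_mpoly f l ^+ e \is e.-homog.
  by have := dhomogMn e (map_mpoly_homog (fmorph_inj f) homl); rewrite mul1n.
have homl' : l ^+ (e + D) \is (e + D).-homog.
  by have := dhomogMn (e + D) homl; rewrite mul1n.
have ikD : (i + (e + D) = i + e + D)%N by rewrite addnA.
have rk_colon := rank_quot_mulmx_colon idealA homF homz (erefl _) ikD.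
have rk_spec := rank_quot_mulmx_specialize d idealJ gradedJ indep e i (i + (e + D)) homl.
rewrite -/D -/F in rk_spec.
case=> [/(quot_mulmx_injP idealJ homl' (erefl _)) inj | ].
  left; apply/(quot_mulmx_injP (colon_is_ideal idealA F) homz (erefl _)).
  rewrite rk_colon (quot_dim_colon idealA homF (erefl _)).
  have := rank_quot_mulmx_le_src idealA homF (erefl (i + D)%N).
  by rewrite quot_dim_ext //; lia.
move/(quot_mulmx_surjP idealJ homl' (erefl _)) => surj.
right; apply/(quot_mulmx_surjP (colon_is_ideal idealA F) homz (erefl _)).
rewrite rk_colon (quot_dim_colon idealA homF ikD).
have := rank_quot_mulmx_le_tgt (ext_ideal f J) F (i + e) (i + (e + D)).
by rewrite quot_dim_ext //; lia.
Qed.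

End FullRankTransfer.

Theorem lemma4p5 (K' K : fieldType) (f : {rmorphism K' -> K}) (n m : nat)
  (J : {mpoly K'[n]} -> Prop) (xi : 'M[K]_(m, n)) (d : 'I_m -> nat) :
  [pchar K] =i pred0 ->
  is_ideal J -> is_graded J -> has_SLP J ->
  alg_indep f xi ->
  (forall i, (0 < d i)%N) ->
  has_SLP (colon (ext_ideal f J) (\prod_(i < m) lin_form xi i ^+ d i)).
Proof.
move=> _ idealJ gradedJ [artJ [l [homl slJ]]] indep _.
set F := \prod_i _; set D := (\sum_i d i)%N.
have homF : F \is D.-homog := dhomog_prod_expn d (lin_form_homog xi).
have zero_colon k : piece_zero J (k + D) -> piece_zero (colon (ext_ideal f J) F) k.
  by move/(piece_zero_ext f) => zA; exact (piece_zero_colon homF zA).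
split.
  by case: artJ => N zN; exists N => k kN; apply/zero_colon/zN; lia.
exists (map_mpoly f l); split; first exact: map_mpoly_homog (fmorph_inj f) homl.
move=> c e i nzc _ e1 ec ie.
have [c' cc' [nzc' zc'1]] := artinian_socle artJ (fun zJ => nzc (zero_colon c zJ)).
by apply: full_rank_colon => //; apply: slJ nzc' zc'1 _ _ _; lia.
Qed.
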